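(* Let $\mathbb{X}$ be a smooth real Banach space and $\mathbb{Y}$ a strictly convex and smooth real Banach space. Let $T\in\mathbb{L}(\mathbb{X},\mathbb{Y})$ with $\operatorname{rank}T=1$ and $\|T\|=1$. If $(x,Tx)$ is not a weak CPP for some $x\in M_T$, then $T$ is an extreme contraction.
   Context: All Banach spaces are real and of dimension greater than $1$. $M_T=\{x\in S_{\mathbb{X}}:\|Tx\|=\|T\|\}$. A norm one $T\in\mathbb{L}(\mathbb{X},\mathbb{Y})$ is an extreme contraction if it is an extreme point of the closed unit ball of $\mathbb{L}(\mathbb{X},\mathbb{Y})$. $B(x,r)=\{u:\|u-x\|<r\}$. $x\perp_B y$ means $\|x+\lambda y\|\ge\|x\|$ for all real $\lambda$; $x^\perp=\{y:x\perp_By\}$. For $x\in S_{\mathbb{X}}$, $y\in S_{\mathbb{Y}}$, $(x,y)$ is a weak CPP if there exist $z\in x^\perp\cap S_{\mathbb{X}}$, $w\in y^\perp\cap S_{\mathbb{Y}}$, $r>0$, $\mu>0$ such that for all $a,b\in\mathbb{R}$, $ax+bz\in B(x,r)\cap S_{\mathbb{X}}$ implies $\|ay+b\mu w\|\le1$. *)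

From HB Require Import structures.
From mathcomp Require Import all_boot all_order all_algebra.
From mathcomp Require Import all_classical all_reals all_analysis.
Set Implicit Arguments. Unset Strict Implicit. Unset Printing Implicit Defensive.
Import Order.TTheory GRing.Theory Num.Theory.
Import numFieldNormedType.Exports.
Local Open Scope classical_set_scope.
Local Open Scope ring_scope.

Section BanachDefs.
Variable R : realType.

Definition opnorm (X Y : normedModType R) (f : X -> Y) : R :=
  sup [set `|f x| | x in [set x : X | `|x| <= 1]].

Definition dim_gt1 (X : normedModType R) : Prop :=
  exists u v : X, forall a b : R, a *: u + b *: v = 0 -> a = 0 /\ b = 0.

Definition smooth (X : normedModType R) : Prop :=
  forall x : X, `|x| = 1 ->
  forall f g : {linear X -> R^o}, continuous f -> continuous g ->
    opnorm f = 1 -> opnorm g = 1 -> f x = 1 -> g x = 1 ->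
    forall z, f z = g z.

Definition strictly_convex (X : normedModType R) : Prop :=
  forall x y : X, `|x| = 1 -> `|y| = 1 -> x <> y ->
  forall t : R, 0 < t < 1 -> `|t *: x + (1 - t) *: y| < 1.

Definition rank1 (X Y : normedModType R) (T : X -> Y) : Prop :=
  exists y0 : Y, y0 <> 0 /\ range T = [set a *: y0 | a in [set: R]].

Definition M_T (X Y : normedModType R) (T : X -> Y) : set X :=
  [set x | `|x| = 1 /\ `|T x| = opnorm T].

Definition BJorth (X : normedModType R) (x y : X) : Prop :=
  forall l : R, `|x| <= `|x + l *: y|.

Definition oball (X : normedModType R) (x : X) (r : R) : set X :=
  [set u | `|u - x| < r].

Definition weakCPP (X Y : normedModType R) (x : X) (y : Y) : Prop :=
  exists (z : X) (w : Y) (r mu : R),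
    [/\ BJorth x z, `|z| = 1, BJorth y w & `|w| = 1] /\ 0 < r /\ 0 < mu /\
    forall a b : R,
      oball x r (a *: x + b *: z) -> `|a *: x + b *: z| = 1 ->
      `|a *: y + b *: (mu *: w)| <= 1.

Definition extreme_contraction (X Y : normedModType R) (T : {linear X -> Y}) :
  Prop :=
  opnorm T = 1 /\
  forall (T1 T2 : {linear X -> Y}) (t : R),
    continuous T1 -> continuous T2 -> opnorm T1 <= 1 -> opnorm T2 <= 1 ->
    0 < t < 1 -> (forall x, T x = t *: T1 x + (1 - t) *: T2 x) ->
    (forall x, T1 x = T x) /\ (forall x, T2 x = T x).

End BanachDefs.

From HB Require Import structures.
From mathcomp Require Import all_boot all_order all_algebra.
From mathcomp Require Import all_classical all_reals all_analysis.
From mathcomp Require Import lra.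
Import Order.TTheory GRing.Theory Num.Theory.
Import numFieldNormedType.Exports.
Local Open Scope classical_set_scope.
Local Open Scope ring_scope.
Set Implicit Arguments.
Unset Strict Implicit.

(* Let x0 be in M_T, y0 := T x0, and g a norm-one functional with g y0 = 1
   (Hahn-Banach, here via Zorn's lemma applied to sublinear functionals dominated
   by the norm). As T has rank one, T x = g (T x) *: y0. Suppose T = s A + (1 - s) B
   with A, B in the unit ball. Strict convexity of Y gives A x0 = y0, so g \o A
   and g \o T are norm-one functionals attaining their norm at x0; smoothness of
   X makes them equal. If A u <> T u, then z := u - g (T u) *: x0, normalised,
   lies in ker T while v := A z is a nonzero vector of ker g; x0 _|_ z and
   y0 _|_ v are witnessed by g \o A and g, and a y0 + b v = A (a x0 + b z) has
   norm at most 1 when a x0 + b z is a unit vector. So (x0, y0) would be a weak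
   CPP with r = 1 and mu = |v|. *)

Lemma le_infD (R : realType) (E1 E2 : set R) z : E1 !=set0 -> E2 !=set0 ->
  (forall a b, E1 a -> E2 b -> z <= a + b) -> z <= inf E1 + inf E2.
Proof.
move=> E1n0 E2n0 zle; rewrite -lerBlDr; apply: lb_le_inf => // a E1a.
rewrite lerBlDr addrC -lerBlDr; apply: lb_le_inf => // b E2b.
by rewrite lerBlDr addrC; exact: zle.
Qed.

Section Sublinear.
Variables (R : realType) (V : lmodType R).
Implicit Types (p q : V -> R) (x y : V).

Definition sublinear q :=
  (forall x y, q (x + y) <= q x + q y) /\
  (forall (l : R) x, 0 <= l -> q (l *: x) = l * q x).

Lemma sublinear0 q : sublinear q -> q 0 = 0.
Proof. by move=> [_ qZ]; rewrite -(scale0r (0 : V)) qZ // mul0r. Qed.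

Lemma sublinear_oppr_le q x : sublinear q -> - q (- x) <= q x.
Proof. by move=> sq; have := sq.1 x (- x); rewrite subrr sublinear0 //; lra. Qed.

Lemma sublinear_of_scale_le q : (forall x y, q (x + y) <= q x + q y) -> q 0 = 0 ->
  (forall (l : R) x, 0 < l -> q (l *: x) <= l * q x) -> sublinear q.
Proof.
move=> qD q0 qZ; split=> // l x; rewrite le0r => /predU1P [->|l0].
  by rewrite scale0r mul0r.
apply/le_anti; rewrite qZ //= -ler_pdivlMl //.
by have := qZ l^-1 (l *: x); rewrite invr_gt0 scalerA mulVf ?gt_eqF // scale1r; apply.
Qed.

Definition sublinear_shift q y x : R :=
  inf [set q (x + t *: y) - t * q y | t in [set t : R | 0 <= t]].

Lemma sublinear_shift_le q y x t : sublinear q -> 0 <= t ->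
  sublinear_shift q y x <= q (x + t *: y) - t * q y.
Proof.
move=> sq t0; apply: ge_inf; last by exists t.
exists (- q (- x)) => _ [s s0 <-].
by have := sq.1 (x + s *: y) (- x); rewrite addrC addKr sq.2 //; lra.
Qed.

Lemma sublinear_shift_set_n0 q y x :
  [set q (x + t *: y) - t * q y | t in [set t : R | 0 <= t]] !=set0.
Proof. by exists (q x); exists 0; rewrite /= ?scale0r ?addr0 ?mul0r ?subr0. Qed.

Lemma sublinear_shift_ge q y x c :
  (forall t, 0 <= t -> c <= q (x + t *: y) - t * q y) -> c <= sublinear_shift q y x.
Proof.
move=> cle; apply: lb_le_inf; first exact: sublinear_shift_set_n0.
by move=> _ [t t0 <-]; exact: cle.
Qed.

Lemma sublinear_shift_le_self q y x : sublinear q -> sublinear_shift q y x <= q x.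
Proof.
move=> sq; have := sublinear_shift_le y x sq (lexx 0).
by rewrite scale0r addr0 mul0r subr0.
Qed.

Lemma sublinear_shift_sublinear q y : sublinear q -> sublinear (sublinear_shift q y).
Proof.
move=> sq; apply: sublinear_of_scale_le.
- move=> x1 x2; apply: le_infD; [exact: sublinear_shift_set_n0..|].
  move=> _ _ [t1 t1p <-] [t2 t2p <-].
  apply: le_trans (sublinear_shift_le _ _ sq (addr_ge0 t1p t2p)) _.
  rewrite scalerDl addrACA mulrDl.
  by have := sq.1 (x1 + t1 *: y) (x2 + t2 *: y); lra.
- apply/le_anti/andP; split.
    by rewrite -[leRHS](sublinear0 sq); exact: sublinear_shift_le_self.
  by apply: sublinear_shift_ge => t t0; rewrite add0r sq.2 // subrr.
- move=> l x l0; rewrite mulrC -ler_pdivrMr //; apply: sublinear_shift_ge => t t0.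
  rewrite ler_pdivrMr //.
  apply: le_trans (sublinear_shift_le _ _ sq (mulr_ge0 (ltW l0) t0)) _.
  by rewrite -scalerA -scalerDr (sq.2 _ _ (ltW l0)); lra.
Qed.

Section ChainInf.
Variables (p : V -> R) (Q : set (V -> R)).
Hypothesis Q_sub : forall q, Q q -> sublinear q /\ forall x, q x <= p x.
Hypothesis Q_n0 : Q !=set0.
Hypothesis Q_total : forall q1 q2, Q q1 -> Q q2 ->
  (forall x, q1 x <= q2 x) \/ (forall x, q2 x <= q1 x).

Definition chain_inf x := inf [set q x | q in Q].

Lemma chain_inf_le q x : Q q -> chain_inf x <= q x.
Proof.
move=> Qq; apply: ge_inf; last by exists q.
exists (- p (- x)) => _ [q' Qq' <-]; have [sq' q'p] := Q_sub Qq'.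
by have := sublinear_oppr_le x sq'; have := q'p (- x); lra.
Qed.

Lemma chain_inf_ge x c : (forall q, Q q -> c <= q x) -> c <= chain_inf x.
Proof.
move=> cle; have [q0 Qq0] := Q_n0; apply: lb_le_inf; first by exists (q0 x), q0.
by move=> _ [q Qq <-]; exact: cle.
Qed.

Lemma chain_inf_sublinear : sublinear chain_inf.
Proof.
have [q0 Qq0] := Q_n0; apply: sublinear_of_scale_le.
- move=> x y; apply: le_infD; [by exists (q0 x), q0 | by exists (q0 y), q0 |].
  move=> _ _ [q1 Qq1 <-] [q2 Qq2 <-].
  have [sq1 _] := Q_sub Qq1; have [sq2 _] := Q_sub Qq2.
  have [le12|le21] := Q_total Qq1 Qq2.
  + apply: le_trans (chain_inf_le _ Qq1) _; have := sq1.1 x y; have := le12 y; lra.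
  + apply: le_trans (chain_inf_le _ Qq2) _; have := sq2.1 x y; have := le21 x; lra.
- apply/le_anti/andP; split.
    by have [sq0 _] := Q_sub Qq0; rewrite -(sublinear0 sq0); exact: chain_inf_le.
  by apply: chain_inf_ge => q Qq; have [sq _] := Q_sub Qq; rewrite sublinear0.
- move=> l x l0; rewrite mulrC -ler_pdivrMr //; apply: chain_inf_ge => q Qq.
  have [sq _] := Q_sub Qq; rewrite ler_pdivrMr // mulrC -(sq.2 _ _ (ltW l0)).
  exact: chain_inf_le.
Qed.

End ChainInf.

Lemma exists_minimal_sublinear p : sublinear p ->
  exists q, [/\ sublinear q, forall x, q x <= p x &
    forall q', sublinear q' -> (forall x, q' x <= q x) -> forall x, q x <= q' x].
Proof.
move=> sp; pose S := {q : V -> R | sublinear q /\ forall x, q x <= p x}.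
pose ge_S (q1 q2 : S) := `[< forall x, sval q2 x <= sval q1 x >].
pose mkS q (sq : sublinear q) (q_p : forall x, q x <= p x) : S :=
  exist _ q (conj sq q_p).
have pS := mkS p sp (fun x => lexx (p x)).
have [||| qm qm_min] := @ZL_preorder S pS ge_S.
- by move=> q; apply/asboolP.
- move=> q1 q2 q3 /asboolP le21 /asboolP le32; apply/asboolP => x.
  exact: le_trans (le32 x) (le21 x).
- move=> A A_total; have [[q0 Aq0]|A0] := pselect (A !=set0); last first.
    by exists pS => q Aq; exfalso; apply: A0; exists q.
  have Q_sub q : (sval @` A) q -> sublinear q /\ forall x, q x <= p x.
    by move=> [q' _ <-]; exact: (svalP q').
  have Q_total q1 q2 : (sval @` A) q1 -> (sval @` A) q2 ->
      (forall x, q1 x <= q2 x) \/ (forall x, q2 x <= q1 x).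
    move=> [q1' Aq1 <-] [q2' Aq2 <-].
    by have [/asboolP|/asboolP] := A_total _ _ Aq1 Aq2; [right|left].
  have Q_n0 : (sval @` A) !=set0 by exists (sval q0), q0.
  have m_p x : chain_inf (sval @` A) x <= p x.
    apply: le_trans _ ((svalP q0).2 x).
    by apply: (@chain_inf_le p _ Q_sub (sval q0)); exists q0.
  exists (mkS _ (chain_inf_sublinear Q_sub Q_n0 Q_total) m_p).
  move=> q Aq; apply/asboolP => x /=.
  by apply: (@chain_inf_le p _ Q_sub (sval q)); exists q.
- have [sqm qm_p] := svalP qm; exists (sval qm); split=> // q' sq' le_q'.
  have q'_p x : q' x <= p x := le_trans (le_q' x) (qm_p x).
  by have /asboolP := qm_min (mkS q' sq' q'_p) (asboolT le_q').
Qed.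

Lemma minimal_sublinear_linear q : sublinear q ->
  (forall q', sublinear q' -> (forall x, q' x <= q x) -> forall x, q x <= q' x) ->
  forall a x y, q (a *: x + y) = a * q x + q y.
Proof.
move=> sq q_min.
(* q_y := sublinear_shift q y is sublinear and below q, so minimality gives
   q x <= q_y x <= q (x + y) - q y. *)
have qD x y : q (x + y) = q x + q y.
  apply/le_anti; rewrite sq.1 /=.
  have := q_min _ (sublinear_shift_sublinear y sq) (sublinear_shift_le_self y ^~ sq) x.
  by have := sublinear_shift_le y x sq ler01; rewrite scale1r mul1r; lra.
have qN x : q (- x) = - q x.
  by have := qD x (- x); rewrite subrr sublinear0 //; lra.
move=> a x y; rewrite qD; congr (_ + _).
have [a0|a0] := leP 0 a; first exact: sq.2.
have Na0 : 0 <= - a by rewrite oppr_ge0 ltW.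
by rewrite -[a]opprK scaleNr qN sq.2 // !mulNr !opprK.
Qed.

Theorem hahn_banach p : sublinear p ->
  exists g : {linear V -> R^o}, forall x, g x <= p x.
Proof.
move=> sp; have [q [sq q_p q_min]] := exists_minimal_sublinear sp.
exists (HB.pack_for {linear V -> R^o} q
  (GRing.isLinear.Build R V R^o *:%R q (minimal_sublinear_linear sq q_min))).
exact: q_p.
Qed.

End Sublinear.

Section OperatorNorm.
Variables (R : realType) (X Y : normedModType R).
Implicit Type h : {linear X -> Y}.

Lemma opnorm_ub h x : continuous h -> `|x| <= 1 -> `|h x| <= opnorm h.
Proof.
move=> hc x1; have /bounded_funP/(_ 1) [M hM] := proj2 (linear_bounded_continuous h) hc.
apply: ub_le_sup; last by exists x.
by exists M => _ [y y1 <-]; exact: hM.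
Qed.

Lemma opnorm_le (f : X -> Y) c : (forall x, `|x| <= 1 -> `|f x| <= c) -> opnorm f <= c.
Proof.
move=> fc; apply: ge_sup; first by exists `|f 0|, 0; rewrite //= normr0.
by move=> _ [x x1 <-]; exact: fc.
Qed.

Lemma norm_le_opnorm h x : continuous h -> `|h x| <= opnorm h * `|x|.
Proof.
move=> hc; have [->|x_neq0] := eqVneq x 0; first by rewrite linear0 !normr0 mulr0.
have nx : 0 < `|x| by rewrite normr_gt0.
rewrite -{1}(scalerKV (lt0r_neq0 nx) x) linearZ /= normrZ gtr0_norm // mulrC.
by rewrite ler_pM2r // opnorm_ub // normfZV.
Qed.

Lemma contraction_le h x : continuous h -> opnorm h <= 1 -> `|h x| <= `|x|.
Proof.
move=> hc h1; apply: le_trans (norm_le_opnorm x hc) _.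
by rewrite ler_piMl.
Qed.

Lemma opnorm_eq1 h x0 : continuous h -> (forall x, `|h x| <= `|x|) ->
  `|x0| = 1 -> `|h x0| = 1 -> opnorm h = 1.
Proof.
move=> hc h_le nx0 nhx0; apply/le_anti/andP; split.
  by apply: opnorm_le => x x1; exact: le_trans (h_le x) x1.
by rewrite -{1}nhx0 opnorm_ub // nx0.
Qed.

End OperatorNorm.

Section NormedGeometry.
Variable R : realType.

Lemma norming_functional (Y : normedModType R) (y0 : Y) : `|y0| = 1 ->
  exists g : {linear Y -> R^o},
    [/\ continuous g, forall y, `|g y| <= `|y| & g y0 = 1].
Proof.
move=> ny0.
have snorm : sublinear (fun y : Y => `|y|).
  by split=> [y1 y2|l y l0]; rewrite ?ler_normD // normrZ ger0_norm.
(* Dominating g by the norm shifted along y0 forces g (- y0) <= - 1. *)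
have [g g_le] := hahn_banach (sublinear_shift_sublinear y0 snorm).
have g_norm y : g y <= `|y| := le_trans (g_le y) (sublinear_shift_le_self y0 y snorm).
have g_abs y : `|g y| <= `|y|.
  by rewrite ler_norml g_norm andbT; have := g_norm (- y); rewrite linearN normrN; lra.
exists g; split=> //.
- apply/linear_bounded_continuous/bounded_funP => r; exists r => y yr.
  exact: le_trans (g_abs y) yr.
- have := g_le (- y0); have := sublinear_shift_le y0 (- y0) snorm ler01.
  rewrite scale1r addNr normr0 mul1r ny0 linearN.
  by have := g_norm y0; rewrite ny0; lra.
Qed.

Lemma strictly_convex_unit_extreme (Y : normedModType R) (y a b : Y) (s : R) :
  strictly_convex Y -> `|y| = 1 -> `|a| <= 1 -> `|b| <= 1 -> 0 < s < 1 ->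
  y = s *: a + (1 - s) *: b -> a = y.
Proof.
move=> scY ny a1 b1 /andP [s0 s1] y_ab.
have ny_le : 1 <= s * `|a| + (1 - s) * `|b|.
  rewrite -[leLHS]ny y_ab; apply: le_trans (ler_normD _ _) _.
  by rewrite !normrZ !ger0_norm ?subr_ge0 ?(ltW s0) ?(ltW s1).
have [ab|a_neq_b] := eqVneq a b.
  by rewrite y_ab -ab -scalerDl addrC subrK scale1r.
have na : `|a| = 1 by apply/le_anti; rewrite a1 /=; clear y_ab a_neq_b; nra.
have nb : `|b| = 1 by apply/le_anti; rewrite b1 /=; clear y_ab a_neq_b; nra.
have := scY a b na nb (elimN eqP a_neq_b) s; rewrite s0 s1 -y_ab ny ltxx.
by move/(_ isT).
Qed.

Lemma BJorth_of_supporting (X : normedModType R) (f : {linear X -> R^o}) (x z : X) :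
  (forall u, f u <= `|u|) -> f x = `|x| -> f z = 0 -> BJorth x z.
Proof.
move=> f_le fx fz l; have := f_le (x + l *: z).
by rewrite linearD linearZ /= fz fx [_ *: _]mulr0 addr0.
Qed.

Lemma rank1_factor (X Y : normedModType R) (T : {linear X -> Y})
    (g : {linear Y -> R^o}) (x0 : X) :
  rank1 T -> g (T x0) = 1 -> forall x, T x = g (T x) *: T x0.
Proof.
move=> [y1 [_ rngT]] gTx0 x.
have [a _ Tx] : [set a *: y1 | a in [set: R]] (T x) by rewrite -rngT; exists x.
have [a0 _ Tx0] : [set a *: y1 | a in [set: R]] (T x0) by rewrite -rngT; exists x0.
have a0_neq0 : a0 != 0.
  apply: contra_eq_neq gTx0 => a00.
  by rewrite -Tx0 a00 scale0r linear0 eq_sym oner_neq0.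
have -> : T x = (a / a0) *: T x0 by rewrite -Tx0 scalerA divfK.
by rewrite linearZ /= gTx0 [_%:A]mulr1.
Qed.

End NormedGeometry.

Section WeakCPP.
Variables (R : realType) (X Y : normedModType R).
Variables (T A : {linear X -> Y}) (g : {linear Y -> R^o}) (x0 : X).
Hypotheses (nx0 : `|x0| = 1) (g_le : forall y, `|g y| <= `|y|) (gTx0 : g (T x0) = 1).
Hypothesis T_factor : forall x, T x = g (T x) *: T x0.
Hypotheses (A_le : forall x, `|A x| <= `|x|) (Ax0 : A x0 = T x0).
Hypothesis gA : forall x, g (A x) = g (T x).

Lemma weakCPP_of_neq u : A u != T u -> weakCPP x0 (T x0).
Proof.
move=> Au_neq.
have nTx0 : `|T x0| = 1.
  apply/le_anti/andP; split; first by rewrite -Ax0 -nx0 A_le.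
  by rewrite -[leLHS]gTx0 (le_trans (ler_norm _) (g_le _)).
have g_norm y : g y <= `|y| := le_trans (ler_norm _) (g_le y).
pose z' := u - g (T u) *: x0.
have Tz' : T z' = 0 by rewrite linearB linearZ /= -T_factor subrr.
have Az' : A z' = A u - T u by rewrite linearB linearZ /= Ax0 -T_factor.
have z'_neq0 : z' != 0.
  by apply: contra_neq Au_neq => z'0; apply/eqP; rewrite -subr_eq0 -Az' z'0 linear0.
pose z := `|z'|^-1 *: z'.
have Tz : T z = 0 by rewrite linearZ /= Tz' scaler0.
pose v := A z.
have v_neq0 : v != 0.
  rewrite /v linearZ /= scaler_eq0 negb_or invr_eq0 normr_eq0 z'_neq0 /= Az' subr_eq0.
  exact: Au_neq.
have gv : g v = 0 by rewrite gA Tz linear0.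
exists z, (`|v|^-1 *: v), 1, `|v|; split; first split.
- apply: (@BJorth_of_supporting _ _ (g \o A)) => [w|/=|/=].
  + exact: le_trans (g_norm _) (A_le w).
  + by rewrite Ax0 gTx0 nx0.
  + by rewrite gA Tz linear0.
- exact: normfZV.
- apply: (@BJorth_of_supporting _ _ g) => //; first by rewrite gTx0 nTx0.
  by rewrite linearZ /= gv [_ *: _]mulr0.
- exact: normfZV.
split=> //; split; first by rewrite normr_gt0.
move=> a b _ nab; rewrite scalerKV ?normr_eq0 //.
have <- : A (a *: x0 + b *: z) = a *: T x0 + b *: v.
  by rewrite linearD [A (a *: _)]linearZ [A (b *: _)]linearZ /= Ax0.
by rewrite -nab A_le.
Qed.

End WeakCPP.

Section Extremality.
Variables (R : realType) (X Y : normedModType R).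
Hypotheses (smX : smooth X) (scY : strictly_convex Y).
Variables (T : {linear X -> Y}) (g : {linear Y -> R^o}) (x0 : X).
Hypotheses (T_cont : continuous T) (T_norm : opnorm T = 1) (T_rank : rank1 T).
Hypotheses (nx0 : `|x0| = 1) (nTx0 : `|T x0| = 1).
Hypotheses (g_cont : continuous g) (g_le : forall y, `|g y| <= `|y|).
Hypothesis gTx0 : g (T x0) = 1.
Hypothesis not_wCPP : ~ weakCPP x0 (T x0).

Lemma norming_comp (C : {linear X -> Y}) : continuous C ->
  (forall x, `|C x| <= `|x|) -> C x0 = T x0 ->
  continuous (g \o C) /\ opnorm (g \o C) = 1.
Proof.
move=> C_cont C_le Cx0.
have gC_cont : continuous (g \o C).
  by move=> x; apply: continuous_comp; [exact: C_cont | exact: g_cont].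
split=> //; apply: (opnorm_eq1 (x0 := x0)) => //= [x|].
  exact: le_trans (g_le _) (C_le x).
by rewrite Cx0 gTx0 normr1.
Qed.

Lemma convex_summand_eq (A B : {linear X -> Y}) (s : R) :
  continuous A -> continuous B -> opnorm A <= 1 -> opnorm B <= 1 -> 0 < s < 1 ->
  (forall x, T x = s *: A x + (1 - s) *: B x) -> forall x, A x = T x.
Proof.
move=> A_cont B_cont A1 B1 s01 T_AB.
have A_le x : `|A x| <= `|x| := contraction_le x A_cont A1.
have B_le x : `|B x| <= `|x| := contraction_le x B_cont B1.
have T_le x : `|T x| <= `|x| by apply: contraction_le; rewrite ?T_norm.
have Ax0 : A x0 = T x0.
  by apply: strictly_convex_unit_extreme (T_AB x0); rewrite // -nx0.
have [gA_cont gA_norm] := norming_comp A_cont A_le Ax0.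
have [gT_cont gT_norm] := norming_comp T_cont T_le erefl.
have gA x : g (A x) = g (T x).
  by apply: (smX nx0 gA_cont gT_cont gA_norm gT_norm) => /=; rewrite ?Ax0.
move=> x; apply/eqP; apply: contrapT => /negP Ax_neq; apply: not_wCPP.
exact: (weakCPP_of_neq nx0 g_le gTx0 (rank1_factor T_rank gTx0) A_le Ax0 gA Ax_neq).
Qed.

End Extremality.

Theorem mainTheorem4 (R : realType) (X Y : completeNormedModType R)
  (dimX : dim_gt1 X) (dimY : dim_gt1 Y)
  (smX : smooth X) (smY : smooth Y) (scY : strictly_convex Y)
  (T : {linear X -> Y}) (Tcont : continuous T)
  (Trank : rank1 T) (Tnorm : opnorm T = 1) :
  (exists x : X, M_T T x /\ ~ weakCPP x (T x)) ->
  extreme_contraction T.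
Proof.
move=> [x0 [[nx0 nTx0] not_wCPP]]; rewrite Tnorm in nTx0.
have [g [g_cont g_le gTx0]] := norming_functional nTx0.
have summand_eq :=
  convex_summand_eq smX scY Tcont Tnorm Trank nx0 nTx0 g_cont g_le gTx0 not_wCPP.
split=> // T1 T2 t T1_cont T2_cont T1_le T2_le t01 T_12; split.
  exact: summand_eq T1_cont T2_cont T1_le T2_le t01 T_12.
apply: (summand_eq _ _ (1 - t) T2_cont T1_cont T2_le T1_le).
  by move: t01 => /andP [t0 t1]; rewrite subr_gt0 t1 gtrBl t0.
by move=> x; rewrite T_12 addrC subKr.
Qed.
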